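(* For all integers $0<k \leq \ell < n$, the polynomial \[ \overline{ { n \brack k}}_{q,t} \overline{ { n \brack \ell }}_{q,t} - \overline{ { n \brack k-1}}_{q,t} \overline{ { n \brack \ell +1}}_{q,t} \] has non-negative coefficients as a polynomial in $t$ and $q$.
   Context: An overpartition is a partition in which the last occurrence of each distinct part size may be overlined; its weight $|\lambda|$ is the sum of its parts. For integers $0\le b\le a$, $\overline{{a \brack b}}_{q,t}=\sum_{\lambda} t^{\#_o(\lambda)} q^{|\lambda|}$, the sum over all overpartitions $\lambda$ with largest part at most $a-b$ and at most $b$ parts, where $\#_o(\lambda)$ is the number of overlined parts of $\lambda$. *)

From mathcomp Require Import all_boot all_order all_algebra.
Set Implicit Arguments. Unset Strict Implicit. Unset Printing Implicit Defensive.
Import GRing.Theory Num.Theory.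
Local Open Scope ring_scope.

(* An overpartition with at most b parts, each at most m, is encoded as a pair
   (x, o) where
   - x : b.-tuple 'I_m.+1 is the list of parts padded by zeros, in
     non-increasing order (so the nonzero entries form a partition with at
     most b parts and largest part at most m);
   - o : {set 'I_m.+1} is the set of part sizes whose (last) occurrence is
     overlined; it must be a subset of the distinct nonzero parts. *)
Definition is_overpart (m b : nat) (x : (b.-tuple 'I_m.+1) * {set 'I_m.+1}) : bool :=
  sorted geq (map (@nat_of_ord _) x.1) &&
  (x.2 \subset [set i : 'I_m.+1 | (i != ord0) && (i \in (x.1 : seq _))]).

Definition ovp_weight (m b : nat) (x : (b.-tuple 'I_m.+1) * {set 'I_m.+1}) : nat :=
  sumn (map (@nat_of_ord _) x.1).

Definition ovp_nover (m b : nat) (x : (b.-tuple 'I_m.+1) * {set 'I_m.+1}) : nat :=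
  #|x.2|.

(* The overpartition analogue of the Gaussian binomial, as a polynomial in t
   (outer variable) whose coefficients are polynomials in q (inner variable):
   sum over overpartitions lambda with largest part <= a - b and at most b parts
   of t^{#overlined parts} q^{|lambda|}. *)
Definition ovgauss (a b : nat) : {poly {poly int}} :=
  \sum_(x : (b.-tuple 'I_(a - b).+1) * {set 'I_(a - b).+1} | is_overpart x)
     (('X^(ovp_weight x))%:P * 'X^(ovp_nover x)).

From mathcomp Require Import all_boot all_order all_algebra.
From mathcomp Require Import ring zify.
Import GRing.Theory Num.Theory.
Local Open Scope ring_scope.

(* Let G(b, m) be the generating function of the overpartitions in a b x m
   box. Removing the largest part gives
     G(b+1, m+1) = G(b+1, m) + q^(m+1) (G(b, m+1) + t G(b, m)),
   and the conjugate recurrence (removing a column) follows from it by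
   induction. Write V(M, B) = G(M-1, B-1), extended by zero. Applying one
   recurrence to both factors on one side of
     V(M1, B1) V(M2, B2) - q^r V(M1-1, B1+1) V(M2+1, B2-1)
   writes it as x + q^k (y + t z) with x, y, z differences of the same shape
   and smaller indices; the recurrence is chosen so that the shift r stays
   within the slack (M2+1-M1) + (B1+1-B2). By induction every such
   difference has nonnegative coefficients, and the theorem is the case
   r = 0. *)

Fixpoint box_partitions (b m : nat) : seq (seq nat) :=
  if b is b'.+1 then [seq x :: s | x <- iota 0 m.+1, s <- box_partitions b' x]
  else [:: [::]].

Lemma mem_box_partitions b m s :
  (s \in box_partitions b m) = [&& size s == b, sorted geq s & all (leq^~ m) s].
Proof.
elim: b m s => [|b IHb] m s; first by case: s.
apply/allpairsPdep/idP => [[x [s' [xm s'x ->]]] | ].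
  move: xm s'x; rewrite mem_iota leq0n add0n ltnS /= IHb.
  move=> xm /and3P[/eqP <- s'_sorted s'_le].
  rewrite /= eqxx (path_sortedE (rev_trans leq_trans)) s'_le s'_sorted xm /=.
  by apply/allP => y /(allP s'_le) /leq_trans; apply.
case: s => // x s /and3P[size_s].
rewrite [sorted _ _]/= (path_sortedE (rev_trans leq_trans)) => /andP[s_le s_sorted] /andP[xm _].
by exists x, s; rewrite mem_iota leq0n add0n ltnS xm IHb s_sorted s_le !andbT; split.
Qed.

Lemma box_partitions_uniq b m : uniq (box_partitions b m).
Proof.
elim: b m => [|b IHb] m //.
apply: allpairs_uniq_dep => [|x _|]; [exact: iota_uniq | exact: IHb |].
by move=> [x s] [y s'] _ _ [-> ->].
Qed.

Lemma box_partitionsS b m :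
  box_partitions b.+1 m = [seq x :: s | x <- iota 0 m.+1, s <- box_partitions b x].
Proof. by []. Qed.

Lemma box_partitionsSS b m :
  box_partitions b.+1 m.+1 =
    box_partitions b.+1 m ++ [seq m.+1 :: s | s <- box_partitions b m.+1].
Proof. by rewrite !box_partitionsS -[m.+2]addn1 iotaD allpairs_cat allpairs1l. Qed.

Lemma filter_box_partitions b m :
  [seq s <- box_partitions b m.+1 | m.+1 \notin s] = box_partitions b m.
Proof.
case: b => [|b] //; rewrite box_partitionsSS filter_cat.
rewrite (@eq_in_filter _ _ predT) ?filter_predT; last first.
  move=> s; rewrite mem_box_partitions => /and3P[_ _ /allP s_le].
  by apply/negP => /s_le; rewrite ltnn.
by rewrite filter_map (@eq_filter _ _ pred0) ?filter_pred0 ?cats0 // => s /=; rewrite inE eqxx.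
Qed.

Lemma box_partitions_n0 b : box_partitions b 0 = [:: nseq b 0%N].
Proof. by elim: b => //= b ->. Qed.

Section OverpartitionBinomial.

Context {R : comRingType} (q t : R).

Definition distinct_parts (s : seq nat) := undup [seq x <- s | x != 0%N].

(* Each distinct nonzero part of s may or may not be overlined. *)
Definition ovweight (s : seq nat) : R :=
  q ^+ sumn s * (1 + t) ^+ size (distinct_parts s).

Definition ovbinom (b m : nat) : R := \sum_(s <- box_partitions b m) ovweight s.

Lemma ovbinom0n m : ovbinom 0 m = 1.
Proof. by rewrite /ovbinom big_seq1 /ovweight mulr1. Qed.

Lemma ovbinomn0 b : ovbinom b 0 = 1.
Proof.
rewrite /ovbinom box_partitions_n0 big_seq1 /ovweight /distinct_parts.
have -> : sumn (nseq b 0%N) = 0%N by elim: b.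
have -> : [seq x <- nseq b 0%N | x != 0%N] = [::] by elim: b.
by rewrite mulr1.
Qed.

Lemma ovweight_cons x s : (0 < x)%N ->
  ovweight (x :: s) = q ^+ x * (if x \in s then ovweight s else (1 + t) * ovweight s).
Proof.
move=> x_gt0; rewrite /ovweight /distinct_parts /= -lt0n x_gt0 /= mem_filter -lt0n x_gt0.
by case: (x \in s); rewrite /= exprD ?exprS; ring.
Qed.

Lemma ovbinomSS b m :
  ovbinom b.+1 m.+1 = ovbinom b.+1 m + q ^+ m.+1 * (ovbinom b m.+1 + t * ovbinom b m).
Proof.
rewrite {1}/ovbinom box_partitionsSS big_cat big_map; congr (_ + _).
under eq_bigr do rewrite ovweight_cons //.
rewrite -mulr_sumr; congr (_ * _).
rewrite /ovbinom -(filter_box_partitions b m) big_filter.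
rewrite (bigID (fun s => m.+1 \in s)) [X in _ = X + _](bigID (fun s => m.+1 \in s)) /=.
rewrite -addrA mulr_sumr -big_split; congr (_ + _); apply: eq_bigr => s.
  by move->.
by move/negbTE->; rewrite mulrDl mul1r.
Qed.

Lemma ovbinom1S m : ovbinom 1 m.+1 = 1 + q * (ovbinom 1 m + t).
Proof.
elim: m => [|m IHm]; first by rewrite ovbinomSS !ovbinom0n ovbinomn0 mulr1.
by rewrite [in RHS]ovbinomSS [LHS]ovbinomSS IHm !ovbinom0n !exprS; ring.
Qed.

Lemma ovbinomS1 b : ovbinom b.+1 1 = ovbinom b 1 + q ^+ b.+1 * (1 + t).
Proof.
elim: b => [|b IHb]; first by rewrite ovbinomSS !ovbinom0n ovbinomn0 mulr1.
by rewrite [in RHS]ovbinomSS [LHS]ovbinomSS IHb !ovbinomn0 !exprS; ring.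
Qed.

Lemma ovbinomSS_parts b m :
  ovbinom b.+1 m.+1 = ovbinom b m.+1 + q ^+ b.+1 * (ovbinom b.+1 m + t * ovbinom b m).
Proof.
pose D b' m' := ovbinom b'.+1 m'.+1
  - (ovbinom b' m'.+1 + q ^+ b'.+1 * (ovbinom b'.+1 m' + t * ovbinom b' m')).
have DSS b' m' : D b'.+1 m'.+1 = q ^+ m'.+2 * (D b' m'.+1 + t * D b' m') + D b'.+1 m'.
  rewrite /D (ovbinomSS b'.+1 m'.+1) (ovbinomSS b' m'.+1) (ovbinomSS b'.+1 m').
  by rewrite (ovbinomSS b' m') !exprS; ring.
apply/eqP; rewrite -subr_eq0 -/(D b m); apply/eqP.
elim: b m => [|b IHb] m.
  by rewrite /D ovbinom1S !ovbinom0n expr1 mulr1 subrr.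
elim: m => [|m IHm]; first by rewrite /D ovbinomS1 !ovbinomn0 mulr1 subrr.
by rewrite DSS IHm !IHb mulr0 add0r mulr0 addr0.
Qed.

(* Extending by zero on the axes makes both recurrences hold away from (1, 1). *)
Definition ovbox (M B : nat) : R :=
  if (M, B) is (M'.+1, B'.+1) then ovbinom M' B' else 0.

Lemma ovbox0n B : ovbox 0 B = 0. Proof. by []. Qed.
Lemma ovboxn0 M : ovbox M 0 = 0. Proof. by case: M. Qed.
Lemma ovboxSS M B : ovbox M.+1 B.+1 = ovbinom M B. Proof. by []. Qed.

Lemma ovbox_rec m c : (0 < m + c)%N ->
  ovbox m.+1 c.+1 = ovbox m.+1 c + q ^+ c * (ovbox m c.+1 + t * ovbox m c).
Proof.
case: m => [|m]; case: c => [|c] //= _; rewrite ?ovbox0n ?ovboxn0 !ovboxSS.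
- by rewrite !ovbinom0n mulr0 addr0 mulr0 addr0.
- by rewrite !ovbinomn0 mulr0 addr0 mul1r add0r.
- by rewrite ovbinomSS.
Qed.

Lemma ovbox_rec_parts m c : (0 < m + c)%N ->
  ovbox m.+1 c.+1 = ovbox m c.+1 + q ^+ m * (ovbox m.+1 c + t * ovbox m c).
Proof.
case: m => [|m]; case: c => [|c] //= _; rewrite ?ovbox0n ?ovboxn0 !ovboxSS.
- by rewrite !ovbinom0n mulr0 addr0 mul1r add0r.
- by rewrite !ovbinomn0 mulr0 addr0 mulr0 addr0.
- by rewrite ovbinomSS_parts.
Qed.

Definition ovbox_cross (M1 B1 M2 B2 r : nat) : R :=
  ovbox M1 B1 * ovbox M2 B2 - q ^+ r * (ovbox M1.-1 B1.+1 * ovbox M2.+1 B2.-1).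

Lemma ovbox_cross_recr_parts M1 B1 m c r :
  ovbox_cross M1 B1 m.+1 c.+2 r = ovbox_cross M1 B1 m c.+2 r
    + q ^+ m * (ovbox_cross M1 B1 m.+1 c.+1 r.+1 + t * ovbox_cross M1 B1 m c.+1 r.+1).
Proof.
rewrite /ovbox_cross /= (@ovbox_rec_parts m c.+1) ?addnS // (@ovbox_rec_parts m.+1 c) //.
by rewrite !exprS; ring.
Qed.

Lemma ovbox_cross_recr M1 B1 m c r :
  ovbox_cross M1 B1 m.+2 c.+2 r.+1 = ovbox_cross M1 B1 m.+2 c.+1 r.+1
    + q ^+ c.+1 * (ovbox_cross M1 B1 m.+1 c.+2 r + t * ovbox_cross M1 B1 m.+1 c.+1 r).
Proof.
rewrite /ovbox_cross /= (@ovbox_rec m.+1 c.+1) // (@ovbox_rec m.+2 c) //.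
by rewrite !exprS; ring.
Qed.

Lemma ovbox_cross_recl m c M2 B2 r :
  ovbox_cross m.+2 c.+2 M2 B2 r = ovbox_cross m.+2 c.+1 M2 B2 r
    + q ^+ c.+1 * (ovbox_cross m.+1 c.+2 M2 B2 r.+1 + t * ovbox_cross m.+1 c.+1 M2 B2 r.+1).
Proof.
rewrite /ovbox_cross /= (@ovbox_rec m.+1 c.+1) // (@ovbox_rec m c.+2) ?addnS //.
by rewrite !exprS; ring.
Qed.

Lemma ovbox_cross_recl_parts m c M2 B2 r :
  ovbox_cross m.+2 c.+2 M2 B2 r.+1 = ovbox_cross m.+1 c.+2 M2 B2 r.+1
    + q ^+ m.+1 * (ovbox_cross m.+2 c.+1 M2 B2 r + t * ovbox_cross m.+1 c.+1 M2 B2 r).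
Proof.
rewrite /ovbox_cross /= (@ovbox_rec_parts m.+1 c.+1) // (@ovbox_rec_parts m c.+2) ?addnS //.
by rewrite !exprS; ring.
Qed.

Lemma ovbox_cross_edge M1 B1 M2 B2 r : (M1 <= 1)%N || (B2 <= 1)%N ->
  ovbox_cross M1 B1 M2 B2 r = ovbox M1 B1 * ovbox M2 B2.
Proof.
rewrite /ovbox_cross => /orP[M1_le1 | B2_le1].
  by rewrite (_ : M1.-1 = 0%N) ?ovbox0n ?mul0r ?mulr0 ?subr0 //; lia.
by rewrite (_ : B2.-1 = 0%N) ?ovboxn0 ?mulr0 ?subr0 //; lia.
Qed.

Variable S : semiringClosed R.
Hypotheses (Sq : q \in S) (St : t \in S).

Lemma rpred_rec a b c k :
  a \in S -> b \in S -> c \in S -> a + q ^+ k * (b + t * c) \in S.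
Proof. by move=> Sa Sb Sc; rewrite rpredD ?rpredM ?rpredX ?rpredD ?rpredM. Qed.

Lemma rpred_ovbox M B : ovbox M B \in S.
Proof.
case: M B => [|M] [|B]; rewrite ?ovbox0n ?ovboxn0 ?rpred0 // ovboxSS.
by apply: rpred_sum => s _; rewrite rpredM ?rpredX ?rpredD ?rpred1.
Qed.

Lemma rpred_ovbox_cross M1 B1 M2 B2 r :
  (M1 <= M2.+1)%N -> (B2 <= B1.+1)%N -> (r <= (M2.+1 - M1) + (B1.+1 - B2))%N ->
  ovbox_cross M1 B1 M2 B2 r \in S.
Proof.
have [N] := ubnP (M1 + B1 + M2 + B2); elim: N => // N IH in M1 B1 M2 B2 r *.
move=> size_lt leM leB le_r.
have [edge | ] := boolP ((M1 <= 1) || (B2 <= 1))%N.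
  by rewrite ovbox_cross_edge // rpredM ?rpred_ovbox.
case: M1 => [|[|m]] // in size_lt leM le_r *.
case: B2 => [|[|c]] // in size_lt leB le_r * => _.
have [ltM | geM] := ltnP m.+1 M2.
  case: M2 => [|[|u]] // in size_lt leM le_r ltM *.
  have [ltr | ger] := ltnP r ((u.+3 - m.+2) + (B1.+1 - c.+2)).
    by rewrite ovbox_cross_recr_parts; apply: rpred_rec; apply: IH; lia.
  case: r => [|r] in le_r ger *; first lia.
  by rewrite ovbox_cross_recr; apply: rpred_rec; apply: IH; lia.
have -> : M2 = m.+1 by lia.
have [ltB | geB] := ltnP c.+1 B1.
  case: B1 => [|[|z]] // in size_lt leB le_r ltB *.
  have [ltr | ger] := ltnP r (z.+3 - c.+2).
    by rewrite ovbox_cross_recl; apply: rpred_rec; apply: IH; lia.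
  case: r => [|r] in le_r ger *; first lia.
  by rewrite ovbox_cross_recl_parts; apply: rpred_rec; apply: IH; lia.
have -> : B1 = c.+1 by lia.
have -> : r = 0%N by lia.
by rewrite /ovbox_cross expr0 mul1r mulrC subrr rpred0.
Qed.

End OverpartitionBinomial.

Lemma sum_expr_card_subset (R : comRingType) (T : finType) (D : {set T}) (x : R) :
  \sum_(o : {set T} | o \subset D) x ^+ #|o| = (1 + x) ^+ #|D|.
Proof.
have -> : (1 + x) ^+ #|D| = \prod_(i : T) ((if i \in D then x else 0) + 1).
  rewrite -prodr_const big_mkcond /=; apply: eq_bigr => i _.
  by case: (i \in D); rewrite ?add0r // addrC.
rewrite bigA_distr big_mkcond /=; apply: eq_bigr => o _.
rewrite -big_mkcond /=; have [oD | /subsetPn[i io iD]] := boolP (o \subset D).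
  by rewrite -prodr_const; apply: eq_bigr => i io; rewrite (subsetP oD i io).
by rewrite (bigD1 i) //= (negbTE iD) mul0r.
Qed.

Lemma card_nonzero_parts m (s : seq 'I_m.+1) :
  #|[set i : 'I_m.+1 | (i != ord0) && (i \in s)]| = size (distinct_parts (map val s)).
Proof.
have -> : [set i : 'I_m.+1 | (i != ord0) && (i \in s)] = [set i in [seq i <- s | i != ord0]].
  by apply/setP => i; rewrite !inE mem_filter.
rewrite cardsE -(eq_card (mem_undup _)) (card_uniqP (undup_uniq _)).
by rewrite /distinct_parts filter_map undup_map_inj ?size_map //; apply: val_inj.
Qed.

Lemma big_box_partitions (R : Type) (idx : R) (op : Monoid.com_law idx) b m
    (F : seq nat -> R) :
  \big[op/idx]_(x : b.-tuple 'I_m.+1 | sorted geq (map val x)) F (map val x)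
  = \big[op/idx]_(s <- box_partitions b m) F s.
Proof.
rewrite -big_image /=; apply/perm_big/uniq_perm; last 1 first.
- move=> s; rewrite mem_box_partitions; apply/imageP/and3P => [[x x_sorted ->] | ].
    rewrite size_map size_tuple all_map; split=> //.
    by apply/allP => i _ /=; rewrite -ltnS.
  move=> [/eqP size_s s_sorted /allP s_le].
  have size_s' : size (map (@inord m) s) == b by rewrite size_map size_s.
  have val_s : map (@nat_of_ord _) (map (@inord m) s) = s.
    by rewrite -map_comp -[RHS]map_id; apply/eq_in_map => i /s_le /= i_le; rewrite inordK.
  by exists (Tuple size_s'); rewrite ?unfold_in /= val_s.
- by rewrite map_inj_uniq ?enum_uniq // => x y /(inj_map val_inj) /val_inj.
- exact: box_partitions_uniq.
Qed.

Lemma sum_overpartitions (R : comRingType) (q t : R) b m :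
  \sum_(x : b.-tuple 'I_m.+1 * {set 'I_m.+1} | is_overpart x)
     q ^+ ovp_weight x * t ^+ ovp_nover x = ovbinom q t b m.
Proof.
rewrite /ovbinom -big_box_partitions.
under [RHS]eq_bigr do rewrite /ovweight -card_nonzero_parts -sum_expr_card_subset mulr_sumr.
by rewrite pair_big_dep; apply: eq_big => [[x o] | [x o] _].
Qed.

Local Notation nneg_coefs := (polyOver_pred (@Num.Def.nneg_num_pred int)).

Lemma ovgaussE n k : ovgauss n k = ovbox 'X%:P 'X k.+1 (n - k).+1.
Proof. by rewrite ovboxSS -sum_overpartitions; apply: eq_bigr => x _; rewrite polyC_exp. Qed.

Theorem theorem1p5 (n k l : nat) :
  (0 < k)%N -> (k <= l)%N -> (l < n)%N ->
  forall i j : nat,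
    0 <= ((ovgauss n k * ovgauss n l - ovgauss n k.-1 * ovgauss n l.+1)`_i)`_j.
Proof.
move=> k_gt0 le_kl lt_ln i j.
have : ovbox_cross 'X%:P 'X k.+1 (n - k).+1 l.+1 (n - l).+1 0 \is a polyOver nneg_coefs.
  by apply: rpred_ovbox_cross; rewrite ?polyOverC ?polyOverX //; lia.
have -> : ovgauss n k.-1 = ovbox 'X%:P 'X k (n - k).+2.
  by rewrite ovgaussE prednK // (_ : n - k.-1 = (n - k).+1)%N //; lia.
have -> : ovgauss n l.+1 = ovbox 'X%:P 'X l.+2 (n - l).
  by rewrite ovgaussE (_ : (n - l.+1).+1 = n - l)%N //; lia.
by rewrite !ovgaussE /ovbox_cross expr0 mul1r => /polyOverP/(_ i)/polyOverP/(_ j).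
Qed.
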